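(* For every prime power $q$ and every integer $k\ge 2$, there exists an $[n,k]_q$ maximum weight spectrum (MWS) code with $n=2^{\theta_q(k-1)}-1$, where $\theta_q(k-1)=\frac{q^k-1}{q-1}$.
   Context: An $[n,k]_q$ code is a $k$-dimensional $\mathbb{F}_q$-linear subspace $\mathcal{C}$ of $\mathbb{F}_q^n$ with the Hamming weight $w(c)=|\{i: c_i\neq 0\}|$. Standing convention: codes of dimension $k\ge 2$ are non-degenerate, i.e. no coordinate position is identically zero on $\mathcal{C}$. The weight set is $w(\mathcal{C})=\{w(c): c\in\mathcal{C}\setminus\{0\}\}$. For integers $m\ge 0$, $\theta_q(m)=\frac{q^{m+1}-1}{q-1}$. One always has $|w(\mathcal{C})|\le\theta_q(k-1)$, and $\mathcal{C}$ is called a maximum weight spectrum (MWS) code if $|w(\mathcal{C})|=\theta_q(k-1)$. *)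

From HB Require Import structures.
From mathcomp Require Import all_boot all_order all_algebra.
Set Implicit Arguments. Unset Strict Implicit. Unset Printing Implicit Defensive.
Import GRing.Theory.
Local Open Scope ring_scope.

Definition theta (q m : nat) : nat := ((q ^ m.+1 - 1) %/ (q - 1))%N.

Section Codes.
Variables (F : finFieldType) (n : nat).

Definition hweight (c : 'rV[F]_n) : nat := #|[set i : 'I_n | c ord0 i != 0]|.

Definition weight_set (C : {vspace 'rV[F]_n}) : seq nat :=
  undup [seq hweight c | c <- enum [set: 'rV[F]_n] & (c \in C) && (c != 0)].

Definition code_nondegenerate (C : {vspace 'rV[F]_n}) : Prop :=
  forall i : 'I_n, exists2 c : 'rV[F]_n, c \in C & c ord0 i != 0.

Definition is_MWS (C : {vspace 'rV[F]_n}) : Prop :=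
  size (weight_set C) = theta #|F| (\dim C).-1.

End Codes.

From HB Require Import structures.
From mathcomp Require Import all_boot all_order all_algebra.
From mathcomp Require Import ring zify.
Set Implicit Arguments. Unset Strict Implicit. Unset Printing Implicit Defensive.

(* Let P_1, ..., P_N be the points of PG(k-1, q), N = theta_q(k-1), each
   represented by a normalized vector, and let G be the k x (2^N - 1) matrix
   containing the column P_j exactly 2^(j-1) times.  The codeword u G has
   weight sum_{j : u.P_j <> 0} 2^(j-1), so by uniqueness of binary expansions
   its weight determines the set of points outside the hyperplane u^perp, hence
   determines u up to a scalar.  Thus the N projective classes of nonzero
   messages give N distinct weights. *)

Lemma sum_bits_lt (b : nat -> bool) N : \sum_(j < N) b j * 2 ^ j < 2 ^ N.
Proof.
elim: N => [|N IH]; first by rewrite big_ord0.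
rewrite big_ord_recr /= expnS mul2n -addnn -addSn leq_add //.
by case: (b N); rewrite ?mul1n ?mul0n.
Qed.

Lemma sum_bits_inj (a b : nat -> bool) N :
    \sum_(j < N) a j * 2 ^ j = \sum_(j < N) b j * 2 ^ j ->
  forall j, j < N -> a j = b j.
Proof.
elim: N => [|N IH] // E j.
have top_bit (c : nat -> bool) : (\sum_(i < N.+1) c i * 2 ^ i) %/ 2 ^ N = c N.
  by rewrite big_ord_recr /= addnC divnMDl ?expn_gt0 // divn_small ?sum_bits_lt ?addn0.
have eq_top : a N = b N.
  by move: (top_bit a); rewrite E top_bit; case: (a N); case: (b N).
move: E; rewrite !big_ord_recr /= eq_top => /addIn E.
by rewrite ltnS leq_eqVlt => /orP[/eqP-> | /(IH E)].
Qed.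

Lemma sum_trunc_log2 (a : nat -> nat) m :
  \sum_(0 <= i < 2 ^ m - 1) a (trunc_log 2 i.+1) = \sum_(j < m) a j * 2 ^ j.
Proof.
elim: m => [|m IH]; first by rewrite big_ord0 big_geq.
have pow_gt0 : 0 < 2 ^ m by rewrite expn_gt0.
rewrite big_ord_recr /= -IH (big_cat_nat _ (n := 2 ^ m - 1)) //=; last first.
  by rewrite expnS; move: (2 ^ m) pow_gt0 => t; lia.
congr (_ + _); rewrite (eq_big_nat _ _ (F2 := fun=> a m)).
  rewrite sum_nat_const_nat mulnC expnS; congr (_ * _).
  by move: (2 ^ m) pow_gt0 => t; lia.
move=> i /andP[lo hi]; congr a; apply: trunc_log_eq => //.
by rewrite expnS in hi *; move: (2 ^ m) pow_gt0 lo hi => t; lia.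
Qed.

Import GRing.Theory.
Local Open Scope ring_scope.

Section Normalized.
Variables (F : fieldType) (k : nat).
Implicit Types (u r s v : 'rV[F]_k) (a : F).

(* Normalized vectors represent the points of the projective space PG(k-1, F). *)
Definition normalized r : bool :=
  [exists l : 'I_k, (r 0 l == 1) && [forall l' : 'I_k, (l' < l)%N ==> (r 0 l' == 0)]].

Lemma normalized_neq0 r : normalized r -> r != 0.
Proof.
case/existsP=> l /andP[/eqP rl1 _]; apply: contra_eq_neq rl1 => ->.
by rewrite mxE eq_sym oner_neq0.
Qed.

Lemma normalized_delta l : normalized (delta_mx 0 l).
Proof.
apply/existsP; exists l; rewrite mxE !eqxx /=.
apply/forallP=> l'; apply/implyP=> lt_l'l; rewrite mxE eqxx.
by case: (l' =P l) lt_l'l => [-> | _ _]; rewrite ?ltnn.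
Qed.

Lemma normalized_decomposition v :
  v != 0 -> exists a r, [/\ a != 0, normalized r & v = a *: r].
Proof.
case/rV0Pn=> l0 vl0.
case: (@arg_minnP _ l0 (fun l => v 0 l != 0) (@nat_of_ord k) vl0) => l vl l_min.
exists (v 0 l), ((v 0 l)^-1 *: v); split => //; last by rewrite scalerA divff ?scale1r.
apply/existsP; exists l; rewrite mxE mulVf // eqxx /=.
apply/forallP=> l'; apply/implyP=> lt_l'l; rewrite mxE mulf_eq0; apply/orP; right.
by apply: contraLR lt_l'l => /l_min; rewrite -leqNgt.
Qed.

Lemma normalized_scale_eq r s a : normalized r -> normalized s -> r = a *: s -> r = s.
Proof.
move=> /existsP[l /andP[/eqP rl1 /forallP r0]] /existsP[m /andP[/eqP sm1 /forallP s0]] rE.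
suff a1 : a = 1 by rewrite rE a1 scale1r.
have rl : r 0 l = a * s 0 l by rewrite rE mxE.
have rm : r 0 m = a by rewrite rE mxE sm1 mulr1.
case: (ltngtP l m) => [lt_lm | lt_ml | /val_inj eq_lm].
- by move: rl; rewrite rl1 (eqP (implyP (s0 l) lt_lm)) mulr0 => /eqP; rewrite oner_eq0.
- by move: rl; rewrite rl1 -rm (eqP (implyP (r0 m) lt_ml)) mul0r => /eqP; rewrite oner_eq0.
- by rewrite -rm -eq_lm.
Qed.

Definition dotv u v : F := \sum_(l < k) u 0 l * v 0 l.

Lemma dotvC u v : dotv u v = dotv v u.
Proof. by apply: eq_bigr => l _; rewrite mulrC. Qed.

Lemma dotv0r u : dotv u 0 = 0.
Proof. by rewrite /dotv big1 // => l _; rewrite mxE mulr0. Qed.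

Lemma dotvZr u v a : dotv u (a *: v) = a * dotv u v.
Proof. by rewrite /dotv mulr_sumr; apply: eq_bigr => l _; rewrite mxE mulrCA. Qed.

Lemma dotvBr u v w : dotv u (v - w) = dotv u v - dotv u w.
Proof. by rewrite /dotv -sumrB; apply: eq_bigr => l _; rewrite !mxE mulrBr. Qed.

Lemma dotv_deltar u m : dotv u (delta_mx 0 m) = u 0 m.
Proof.
rewrite /dotv (bigD1 m) //= big1 => [|l lm]; first by rewrite mxE !eqxx mulr1 addr0.
by rewrite mxE eqxx (negbTE lm) mulr0.
Qed.

Lemma dotv_eq0_proportional r s : r != 0 ->
  (forall v, (dotv r v == 0) = (dotv s v == 0)) -> exists c, s = c *: r.
Proof.
case/rV0Pn=> l rl eq0; exists (s 0 l / r 0 l); apply/rowP=> m; rewrite mxE.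
(* the test vector r_l e_m - r_m e_l is orthogonal to r *)
have := eq0 (r 0 l *: delta_mx 0 m - r 0 m *: delta_mx 0 l).
rewrite !dotvBr !dotvZr !dotv_deltar mulrC subrr eqxx subr_eq0 => /esym/eqP sE.
by apply: (mulfI rl); rewrite sE; field.
Qed.

End Normalized.

Section Counting.
Variables (F : finFieldType) (k : nat).

Definition normalized_rows := [set r : 'rV[F]_k | normalized r].

Lemma card_normalized_rows : (#|normalized_rows| * (#|F| - 1) = #|F| ^ k - 1)%N.
Proof.
pose scale (p : F * 'rV[F]_k) := p.1 *: p.2.
have scale_inj : {in setX [set~ 0] normalized_rows &, injective scale}.
  move=> [a r] [b s]; rewrite !inE /= => /andP[a0 nr] /andP[b0 ns]; rewrite /scale /= => abE.
  have rs : r = s.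
    apply: (normalized_scale_eq (a := b / a)) => //.
    by rewrite mulrC -scalerA -abE scalerA mulVf ?scale1r.
  subst s; congr (_, _); apply/eqP; rewrite -subr_eq0.
  have : (a - b) *: r == 0 by rewrite scalerBl abE subrr.
  by rewrite scaler_eq0 (negbTE (normalized_neq0 nr)) orbF.
have scale_onto : scale @: setX [set~ 0] normalized_rows = [set~ 0].
  apply/setP=> v; rewrite !inE; apply/imsetP/idP => [[[a r]] | v0].
    by rewrite !inE /= => /andP[a0 nr] ->; rewrite scaler_eq0 negb_or a0 normalized_neq0.
  have [a [r [a0 nr ->]]] := normalized_decomposition v0.
  by exists (a, r); rewrite ?inE /= ?a0.
move: (card_in_imset scale_inj); rewrite scale_onto cardsC1 cardsX cardsC1 card_mx mul1n.
by rewrite mulnC !subn1 => ->.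
Qed.

Lemma theta_card_normalized_rows : (0 < k)%N -> theta #|F| (k - 1) = #|normalized_rows|.
Proof.
move=> k_gt0; rewrite /theta (subn1 k) prednK // -card_normalized_rows mulnK //.
by rewrite subn_gt0 card_finNzRing_gt1.
Qed.

End Counting.

Section Weights.
Variables (F : finFieldType) (n : nat).

Lemma hweightZ (c : 'rV[F]_n) a : a != 0 -> hweight (a *: c) = hweight c.
Proof. by move=> a0; apply: eq_card => i; rewrite !inE mxE mulf_eq0 negb_or a0. Qed.

Lemma weight_setP (C : {vspace 'rV[F]_n}) w :
  reflect (exists2 c, (c \in C) && (c != 0) & w = hweight c) (w \in weight_set C).
Proof.
rewrite mem_undup; apply: (iffP mapP) => -[c cC ->]; exists c => //;
  by move: cC; rewrite mem_filter mem_enum in_setT andbT.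
Qed.

End Weights.

Section GeneratorMatrix.
Variables (F : finFieldType) (k : nat).

Let P := enum (normalized_rows F k).
Let N := size P.
Let n := (2 ^ N - 1)%N.
Implicit Types (u r : 'rV[F]_k).

(* Columns 2^j - 1, ..., 2^(j+1) - 2 all hold the j-th normalized vector. *)
Definition gen_col (i : 'I_n) : 'rV[F]_k := P`_(trunc_log 2 i.+1).

Definition gen_mx : 'M[F]_(k, n) := \matrix_(l, i) gen_col i 0 l.

Lemma mulmx_gen_mxE u i : (u *m gen_mx) 0 i = dotv u (gen_col i).
Proof. by rewrite !mxE; apply: eq_bigr => l _; rewrite mxE. Qed.

Lemma mem_enum_normalized_rows r : (r \in P) = normalized r.
Proof. by rewrite mem_enum inE. Qed.

Lemma normalized_gen_col i : normalized (gen_col i).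
Proof.
rewrite -mem_enum_normalized_rows mem_nth // -(ltn_exp2l _ _ (isT : (1 < 2)%N)).
apply: leq_ltn_trans (trunc_logP _ _) _ => //.
by move: (i : nat) (ltn_ord i); rewrite /n /N; move: (2 ^ size P)%N => t m; lia.
Qed.

Lemma gen_col_onto r : normalized r -> exists i : 'I_n, gen_col i = r.
Proof.
rewrite -mem_enum_normalized_rows => r_in; set j := index r P.
have lt_jN : (j < N)%N by rewrite index_mem.
have pow_gt0 : (0 < 2 ^ j)%N by rewrite expn_gt0.
have lt_in : (2 ^ j - 1 < n)%N.
  by move: (ltn_exp2l j N (isT : (1 < 2)%N)); rewrite lt_jN /n; lia.
exists (Ordinal lt_in); rewrite /gen_col /= subn1 prednK // trunc_expnK //.
exact: nth_index.
Qed.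

Lemma hweight_gen_mx u :
  hweight (u *m gen_mx) = (\sum_(j < N) (dotv u P`_j != 0%R) * 2 ^ j)%N.
Proof.
rewrite /hweight -sum1_card big_mkcond /=.
rewrite -(sum_trunc_log2 (fun j => dotv u P`_j != 0)) big_mkord.
by apply: eq_bigr => i _; rewrite inE mulmx_gen_mxE; case: (_ != 0).
Qed.

Lemma mulmx_gen_mx_eq0 u : (u *m gen_mx == 0) = (u == 0).
Proof.
apply/eqP/eqP=> [uG0 | ->]; last by rewrite mul0mx.
apply/eqP; apply: contraT => /rV0Pn[l].
have [i col_i] := gen_col_onto (normalized_delta F l).
by rewrite -dotv_deltar -col_i -mulmx_gen_mxE uG0 mxE eqxx.
Qed.

Lemma hweight_gen_mx_inj :
  {in P &, injective (fun r => hweight (r *m gen_mx))}.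
Proof.
move=> r s; rewrite !mem_enum_normalized_rows => nr ns; rewrite /= !hweight_gen_mx.
move/(sum_bits_inj (a := fun j => dotv r P`_j != 0) (b := fun j => dotv s P`_j != 0))
  => same_bits.
have same_zeros v : (dotv r v == 0) = (dotv s v == 0).
  have [-> | v0] := eqVneq v 0; first by rewrite !dotv0r eqxx.
  have [a [p [a0 np ->]]] := normalized_decomposition v0.
  have p_in : p \in P by rewrite mem_enum_normalized_rows.
  rewrite !dotvZr !mulf_eq0 (negbTE a0) /= -(nth_index 0 p_in).
  by apply: negb_inj; apply: same_bits; rewrite index_mem.
have [c sE] := dotv_eq0_proportional (normalized_neq0 nr) same_zeros.
by rewrite (normalized_scale_eq ns nr sE).
Qed.

Definition gen_code : {vspace 'rV[F]_n} := limg (linfun (mulmxr gen_mx)).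

Lemma gen_codeP c : reflect (exists u, c = u *m gen_mx) (c \in gen_code).
Proof.
apply: (iffP memv_imgP) => -[u]; first by move=> _ ->; exists u; rewrite lfunE.
by move=> ->; exists u; rewrite ?memvf ?lfunE.
Qed.

Lemma dim_gen_code : \dim gen_code = k.
Proof.
have gen_inj : injective (fun u => u *m gen_mx).
  move=> u v /= uv; apply/eqP; rewrite -subr_eq0 -mulmx_gen_mx_eq0.
  by rewrite mulmxBl uv subrr.
rewrite limg_dim_eq ?dimvf /dim /= ?mul1n // capfv.
by apply/eqP/lker0P => u v; rewrite !lfunE; apply: gen_inj.
Qed.

Lemma gen_code_nondegenerate : code_nondegenerate gen_code.
Proof.
move=> i; have /normalized_neq0/rV0Pn[l col_l] := normalized_gen_col i.
exists (delta_mx 0 l *m gen_mx); first by apply/gen_codeP; exists (delta_mx 0 l).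
by rewrite mulmx_gen_mxE dotvC dotv_deltar.
Qed.

Lemma mem_weight_set_gen_code w :
  (w \in weight_set gen_code) = (w \in [seq hweight (r *m gen_mx) | r <- P]).
Proof.
apply/weight_setP/mapP => [[c /andP[/gen_codeP[u ->] uG0] ->] | [r r_in ->]].
  have u0 : u != 0 by rewrite -mulmx_gen_mx_eq0.
  have [a [r [a0 nr ->]]] := normalized_decomposition u0.
  by exists r; rewrite ?mem_enum_normalized_rows // -scalemxAl hweightZ.
exists (r *m gen_mx) => //.
rewrite mulmx_gen_mx_eq0 normalized_neq0 -?mem_enum_normalized_rows // andbT.
by apply/gen_codeP; exists r.
Qed.

Lemma size_weight_set_gen_code : size (weight_set gen_code) = N.
Proof.
rewrite -[N](size_map (fun r => hweight (r *m gen_mx)) P); apply: perm_size.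
apply: uniq_perm; [exact: undup_uniq | | exact: mem_weight_set_gen_code].
by rewrite (map_inj_in_uniq hweight_gen_mx_inj) enum_uniq.
Qed.

End GeneratorMatrix.

Theorem mainTheorem1 (F : finFieldType) (k : nat) (hk : (2 <= k)%N) :
  exists C : {vspace 'rV[F]_(2 ^ theta #|F| (k - 1) - 1)},
    [/\ \dim C = k, code_nondegenerate C & is_MWS C].
Proof.
have theta_card := theta_card_normalized_rows F (ltnW hk).
rewrite theta_card cardE.
exists (gen_code F k); split; [exact: dim_gen_code | exact: gen_code_nondegenerate |].
by rewrite /is_MWS dim_gen_code size_weight_set_gen_code -subn1 theta_card cardE.
Qed.
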